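(* Let $r \le n$ and $p \ge r$ be positive integers. Let $V \in \mathbb{R}^{n \times r}$, let $W \in \mathbb{R}^{n \times p}$, let $h: \mathbb{R}^{r} \to \mathbb{R}^{p}$ be any (feature) map, and define the correction map $H: \mathbb{R}^r \to \mathbb{R}^n$ by $H(z) = W h(z)$. Consider the set $$\mathcal{M}_r(V, H) = \{ V z + W h(z) \,:\, z \in \mathbb{R}^{r} \} \subset \mathbb{R}^{n}.$$ Let $Q = [q^{(1)}, \dots, q^{(k)}] \in \mathbb{R}^{n \times k}$ be a data matrix with singular values $\sigma_1 \ge \sigma_2 \ge \dots \ge \sigma_{\ell}$, where $\ell = \min(n, k)$ and $\ell \ge r$. Then $$\sum_{i=1}^{k} \min_{\hat{q}^{(i)} \in \mathcal{M}_r(V,H)} \|\hat{q}^{(i)} - q^{(i)}\|_2^2 \;\ge\; \sum_{i = p + r + 1}^{\ell} \sigma_i^2 ,$$ where the minimum is understood as an infimum and the right-hand side is an empty sum (equal to $0$) if $p + r \ge \ell$.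
   Context: $\|\cdot\|_2$ denotes the Euclidean norm. The singular values of $Q$ are listed in non-increasing order. In the paper's typical application $h$ is the quadratic feature map $z \mapsto (z_1z_1, z_1z_2, \dots, z_1 z_r, z_2 z_2, \dots, z_r z_r)^\top$ with $p = r(r+1)/2$, but the statement holds for an arbitrary map $h:\mathbb{R}^r\to\mathbb{R}^p$. *)

From HB Require Import structures.
From mathcomp Require Import all_boot all_order all_algebra.
From mathcomp Require Import all_classical all_reals.
Set Implicit Arguments. Unset Strict Implicit. Unset Printing Implicit Defensive.
Import Order.TTheory GRing.Theory Num.Theory.
Local Open Scope ring_scope.
Local Open Scope classical_set_scope.

Definition sqnorm (R : realType) (n : nat) (x : 'cV[R]_n) : R :=
  \sum_(i < n) (x i 0) ^+ 2.

Definition Mset (R : realType) (n r p : nat) (V : 'M[R]_(n, r)) (W : 'M[R]_(n, p))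
  (h : 'cV[R]_r -> 'cV[R]_p) : set 'cV[R]_n :=
  [set V *m z + W *m h z | z in [set: 'cV[R]_r]].

Definition dist2_to (R : realType) (n : nat) (M : set 'cV[R]_n) (q : 'cV[R]_n) : R :=
  inf [set sqnorm (qh - q) | qh in M].

Definition orthogonal_mx (R : realType) (m : nat) (U : 'M[R]_m) : Prop :=
  U^T *m U = 1%:M.

(* s_0 >= s_1 >= ... >= s_(l-1) >= 0 (0-indexed, l = minn n k) are the singular
   values of Q : 'M_(n,k): there is an SVD Q = U * diag(s) * X^T with U, X
   orthogonal and diag(s) the n x k rectangular diagonal matrix. *)
Definition singular_values (R : realType) (n k : nat) (Q : 'M[R]_(n, k))
  (s : nat -> R) : Prop :=
  (forall i, (i < minn n k)%N -> 0 <= s i) /\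
  (forall i j, (i <= j)%N -> (j < minn n k)%N -> s j <= s i) /\
  exists (U : 'M[R]_n) (X : 'M[R]_k),
    orthogonal_mx U /\ orthogonal_mx X /\
    Q = U *m (\matrix_(i < n, j < k) (if (i : nat) == j then s i else 0)) *m X^T.

From HB Require Import structures.
From mathcomp Require Import all_boot all_order all_algebra.
From mathcomp Require Import all_classical all_reals.
From mathcomp Require Import lra.
Set Implicit Arguments. Unset Strict Implicit. Unset Printing Implicit Defensive.
Import Order.TTheory GRing.Theory Num.Theory.
Local Open Scope ring_scope.
Local Open Scope classical_set_scope.

(* Every point [V z + W h(z)] of the set lies in the column space of [[V W]],
   of dimension [t <= p + r].  Hence the squared distance from [q] to the set
   is at least [|(1 - P) q|^2], where [P] is the orthogonal projector onto that
   space.  Summing over the columns of [Q = U S X^T] gives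
   [tr ((1 - P) Q Q^T) = sum_i (1 - a_i) s_i^2], where the [a_i] are the
   diagonal entries of the projector [U^T P U]: weights in [[0, 1]] summing to
   [t].  Such a weighted sum is smallest when the weight sits on the [t]
   largest singular values, which leaves at least the tail
   [sum_(i >= p + r) s_i^2]. *)

Lemma sum_tail_le_weighted (R : realFieldType) n m (e : nat -> R) (a : 'I_n -> R) :
  (forall i j, (i <= j < n)%N -> e j <= e i) -> (forall i, (i < n)%N -> 0 <= e i) ->
  (forall i, 0 <= a i <= 1) -> \sum_i a i <= m%:R ->
  \sum_(m <= i < n) e i <= \sum_(i < n) (1 - a i) * e i.
Proof.
move=> e_noninc e_ge0 a01 sum_a; rewrite big_geq_mkord /=.
have [n_le_m | m_lt_n] := leqP n m.
  rewrite big_pred0 => [|i]; last by rewrite leqNgt (leq_trans (ltn_ord i)).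
  apply: sumr_ge0 => i _; have /andP[_ a_le1] := a01 i.
  by rewrite mulr_ge0 ?subr_ge0 ?e_ge0.
have sum_ind : \sum_(i < n) ((i < m)%N%:R : R) = m%:R.
  transitivity (\sum_(i < m) (1 : R)); last by rewrite sumr_const card_ord.
  rewrite (big_ord_widen n (fun=> 1 : R) (ltnW m_lt_n)) [RHS]big_mkcond.
  by apply: eq_bigr => i _; case: (i < m)%N.
(* [e m] bounds the tail from above and the head from below. *)
set c := e m; have c_ge0 : 0 <= c by exact: e_ge0.
apply: (le_trans (_ : _ <=
  \sum_(i < n) ((if (m <= i)%N then e i else 0) + c * ((i < m)%N%:R - a i)))).
  rewrite big_split /= -mulr_sumr sumrB sum_ind big_mkcond /= lerDl.
  by rewrite mulr_ge0 ?subr_ge0.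
apply: ler_sum => i _; have /andP[a_ge0 a_le1] := a01 i.
case: (leqP m i) => [m_le_i | i_lt_m] /=.
  have : e i <= c by apply: e_noninc; rewrite m_le_i ltn_ord.
  nra.
have : c <= e i by apply: e_noninc; rewrite (ltnW i_lt_m) m_lt_n.
nra.
Qed.

Section Projectors.
Variable R : realFieldType.

Definition orth_projector n (P : 'M[R]_n) := P^T = P /\ P *m P = P.

Lemma orth_projector_compl n (P : 'M[R]_n) :
  orth_projector P -> orth_projector (1%:M - P).
Proof.
move=> [PT PP]; split; first by rewrite linearB /= trmx1 PT.
by rewrite mulmxBl mul1mx mulmxBr mulmx1 PP subrr subr0.
Qed.

Lemma orth_projector_conj n (U P : 'M[R]_n) :
  U^T *m U = 1%:M -> orth_projector P -> orth_projector (U^T *m P *m U).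
Proof.
move=> U_orth [PT PP]; have UUt := mulmx1C U_orth; split.
  by rewrite !trmx_mul trmxK PT mulmxA.
by rewrite !mulmxA -(mulmxA _ U) UUt mulmx1 -(mulmxA U^T P P) PP.
Qed.

(* [P i i = (P^T P) i i] is a sum of squares containing [P i i ^+ 2]. *)
Lemma orth_projector_diag n (P : 'M[R]_n) i :
  orth_projector P -> 0 <= P i i <= 1.
Proof.
move=> [PT PP].
have Pii : P i i = \sum_j P j i ^+ 2.
  have -> : P i i = (P^T *m P) i i by rewrite PT PP.
  by rewrite mxE; apply: eq_bigr => j _; rewrite mxE expr2.
have Pii_ge0 : 0 <= P i i by rewrite Pii sumr_ge0 // => j _; apply: sqr_ge0.
have : P i i ^+ 2 <= P i i.
  by rewrite [leRHS]Pii (bigD1 i) //= lerDl sumr_ge0 // => j _; apply: sqr_ge0.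
by rewrite Pii_ge0 /=; nra.
Qed.

Lemma mxtrace_mul_diag n (A : 'M[R]_n) (d : 'rV_n) :
  \tr (A *m diag_mx d) = \sum_i A i i * d 0 i.
Proof. by rewrite mul_mx_diag; apply: eq_bigr => i _; rewrite mxE. Qed.

Lemma sum_tail_le_mxtrace_compl n m (P : 'M[R]_n) (e : nat -> R) :
  orth_projector P -> \tr P <= m%:R ->
  (forall i j, (i <= j < n)%N -> e j <= e i) -> (forall i, (i < n)%N -> 0 <= e i) ->
  \sum_(m <= i < n) e i <= \tr ((1%:M - P) *m diag_mx (\row_(i < n) e i)).
Proof.
move=> P_proj trP e_noninc e_ge0; rewrite mxtrace_mul_diag.
rewrite (eq_bigr (fun i : 'I_n => (1 - P i i) * e i)) => [|i _]; last first.
  by rewrite !mxE eqxx mulr1n.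
by apply: sum_tail_le_weighted => // i; apply: orth_projector_diag.
Qed.

Lemma mulmx_trmx_eq0 m n (M : 'M[R]_(m, n)) : M *m M^T = 0 -> M = 0.
Proof.
move=> MMt0; apply/matrixP => i j; rewrite mxE.
have /eqP : (M *m M^T) i i = 0 by rewrite MMt0 mxE.
rewrite mxE psumr_eq0 => [/allP/(_ j (mem_index_enum _))|l _].
  by rewrite /= mxE mulf_eq0 orbb => /eqP.
by rewrite mxE -expr2 sqr_ge0.
Qed.

Lemma row_free_gram_unit t n (B : 'M[R]_(t, n)) :
  row_free B -> B *m B^T \in unitmx.
Proof.
move=> B_free; rewrite -row_free_unit -kermx_eq0; apply/eqP.
set K := kermx _; have KG0 : K *m (B *m B^T) = 0 := mulmx_ker _.
have KB0 : K *m B = 0.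
  by apply: mulmx_trmx_eq0; rewrite trmx_mul !mulmxA -(mulmxA K) KG0 mul0mx.
by apply: (row_free_inj B_free); rewrite /= KB0 mul0mx.
Qed.

Definition orthoproj t n (B : 'M[R]_(t, n)) := B^T *m invmx (B *m B^T) *m B.

Variables (t n : nat) (B : 'M[R]_(t, n)).
Hypothesis B_free : row_free B.

Lemma mulmx_orthoproj : B *m orthoproj B = B.
Proof.
by rewrite /orthoproj !mulmxA mulmxV ?mul1mx ?row_free_gram_unit.
Qed.

Lemma orthoproj_projector : orth_projector (orthoproj B).
Proof.
split; last by rewrite [X in X *m _]/orthoproj -!mulmxA mulmx_orthoproj !mulmxA.
by rewrite /orthoproj !trmx_mul trmxK trmx_inv trmx_mul trmxK mulmxA.
Qed.

Lemma mxtrace_orthoproj : \tr (orthoproj B) = t%:R.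
Proof.
rewrite /orthoproj mxtrace_mulC mulmxA mulmxV ?mxtrace1 //.
exact: row_free_gram_unit.
Qed.

End Projectors.

Section SquaredNorm.
Variable R : realType.

Lemma sqnormE n (x : 'cV[R]_n) : sqnorm x = (x^T *m x) 0 0.
Proof. by rewrite /sqnorm mxE; apply: eq_bigr => i _; rewrite mxE expr2. Qed.

Lemma sqnorm_ge0 n (x : 'cV[R]_n) : 0 <= sqnorm x.
Proof. by apply: sumr_ge0 => i _; apply: sqr_ge0. Qed.

Lemma sqnormB_ortho n (a b : 'cV[R]_n) :
  a^T *m b = 0 -> sqnorm (a - b) = sqnorm a + sqnorm b.
Proof.
move=> ab0; have ba0 : b^T *m a = 0 by rewrite -[a]trmxK -trmx_mul ab0 trmx0.
rewrite !sqnormE [(a - b)^T]linearB /= mulmxBl !mulmxBr ab0 ba0 subr0 sub0r opprK.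
by rewrite mxE.
Qed.

Lemma sum_sqnorm_col m k (M : 'M[R]_(m, k)) :
  \sum_j sqnorm (col j M) = \tr (M^T *m M).
Proof.
apply: eq_bigr => j _; rewrite /sqnorm mxE.
by apply: eq_bigr => i _; rewrite !mxE expr2.
Qed.

Lemma sum_sqnorm_projector_col n k (N : 'M[R]_n) (Q : 'M[R]_(n, k)) :
  orth_projector N -> \sum_j sqnorm (N *m col j Q) = \tr (N *m (Q *m Q^T)).
Proof.
move=> [NT NN].
under eq_bigr => j _ do rewrite !colE mulmxA -colE.
rewrite sum_sqnorm_col trmx_mul NT -mulmxA mxtrace_mulC -!mulmxA.
by rewrite mulmxA NN.
Qed.

Lemma dist2_to_ge_orthoproj t n (B : 'M[R]_(t, n)) (M : set 'cV[R]_n) q :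
  row_free B -> M !=set0 -> (forall x, M x -> (x^T <= B)%MS) ->
  sqnorm ((1%:M - orthoproj B) *m q) <= dist2_to M q.
Proof.
move=> B_free [x0 Mx0] M_sub; apply: lb_le_inf; first by exists (sqnorm (x0 - q)), x0.
move=> _ [x /M_sub/submxP[c xE] <-]; rewrite -[x]trmxK xE trmx_mul.
set G := B *m B^T.
have -> : B^T *m c^T - q =
    B^T *m (c^T - invmx G *m B *m q) - (1%:M - orthoproj B) *m q.
  by rewrite mulmxBr mulmxBl mul1mx !mulmxA opprB addrA subrK.
have BN0 : B *m (1%:M - orthoproj B) = 0.
  by rewrite mulmxBr mulmx1 mulmx_orthoproj ?subrr.
rewrite sqnormB_ortho ?lerDr ?sqnorm_ge0 //.
by rewrite trmx_mul trmxK -!mulmxA (mulmxA B) BN0 mul0mx !mulmx0.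
Qed.

End SquaredNorm.

Lemma Mset_submx (R : realType) n r p (V : 'M[R]_(n, r)) (W : 'M[R]_(n, p)) h x :
  Mset V W h x -> (x^T <= (row_mx V W)^T)%MS.
Proof.
by move=> [z _ <-]; rewrite -mul_row_col trmx_mul submxMl.
Qed.

Lemma big_nat_trunc (V : nmodType) m n k (f : nat -> V) :
  \sum_(m <= i < n) (if (i < k)%N then f i else 0) = \sum_(m <= i < minn n k) f i.
Proof.
rewrite (big_nat_widen _ _ _ _ _ (geq_minl n k)) [RHS]big_mkcond /=.
by apply: eq_big_nat => i /andP[_ i_lt_n]; rewrite leq_min i_lt_n.
Qed.

Section SingularValues.
Variables (R : realType) (n k : nat) (Q : 'M[R]_(n, k)) (s : nat -> R).
Hypothesis Q_sv : singular_values Q s.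

Lemma gram_singular_values : exists2 U : 'M[R]_n, orthogonal_mx U &
  Q *m Q^T = U *m diag_mx (\row_(i < n) if (i < k)%N then s i ^+ 2 else 0) *m U^T.
Proof.
case: Q_sv => _ [_ [U [X [U_orth [X_orth ->]]]]]; exists U => //.
rewrite !trmx_mul trmxK !mulmxA -(mulmxA _ X^T) X_orth mulmx1 -!mulmxA.
congr (U *m _); rewrite !mulmxA; congr (_ *m U^T).
apply/matrixP => i j; rewrite !mxE.
under eq_bigr => l _ do rewrite !mxE.
have [ik | ki] := ltnP i k; last first.
  rewrite big1 ?mul0rn // => l _; rewrite (_ : (i == l :> nat) = false) ?mul0r //.
  by apply/negbTE; rewrite neq_ltn (leq_trans (ltn_ord l) ki) orbT.
rewrite (bigD1 (Ordinal ik)) //= big1 => [|l il]; last first.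
  rewrite (_ : (i == l :> nat) = false) ?mul0r //.
  by apply: contraNF il => /eqP il; apply/eqP/val_inj.
rewrite eqxx addr0; have [<-|ij] := eqVneq i j; first by rewrite eqxx expr2.
by rewrite (_ : (j == i :> nat) = false) ?mulr0 //; apply/negbTE; rewrite eq_sym.
Qed.

Lemma singular_values_sq_noninc i j : (i <= j < n)%N ->
  (if (j < k)%N then s j ^+ 2 else 0) <= (if (i < k)%N then s i ^+ 2 else 0).
Proof.
case: Q_sv => s_ge0 [s_noninc _] /andP[ij jn].
have [jk | _] := ltnP j k; last by case: ifP => _; rewrite ?sqr_ge0.
have jl : (j < minn n k)%N by rewrite leq_min jn jk.
have sj_ge0 := s_ge0 j jl; have sji := s_noninc i j ij jl.
by rewrite (leq_ltn_trans ij jk) ler_sqr ?nnegrE ?(le_trans sj_ge0 sji).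
Qed.

End SingularValues.

Theorem proposition4p1 (R : realType) (n r p k : nat)
  (r_gt0 : (0 < r)%N) (r_le_n : (r <= n)%N) (r_le_p : (r <= p)%N)
  (V : 'M[R]_(n, r)) (W : 'M[R]_(n, p)) (h : 'cV[R]_r -> 'cV[R]_p)
  (Q : 'M[R]_(n, k)) (s : nat -> R)
  (hl : (r <= minn n k)%N)
  (hs : singular_values Q s) :
  \sum_(i < k) dist2_to (Mset V W h) (col i Q)
    >= \sum_(p + r <= i < minn n k) s i ^+ 2.
Proof.
have [U U_orth QQt] := gram_singular_values hs.
set A := (row_mx V W)^T; have B_free := row_base_free A.
set P := orthoproj (row_base A).
have P_proj : orth_projector P := orthoproj_projector B_free.
have dist_ge q : sqnorm ((1%:M - P) *m q) <= dist2_to (Mset V W h) q.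
  apply: dist2_to_ge_orthoproj => // [|x /Mset_submx xA].
    by exists (V *m 0 + W *m h 0), 0.
  by rewrite (submx_trans xA) // eq_row_base.
apply: le_trans (ler_sum _ (fun i _ => dist_ge (col i Q))).
rewrite sum_sqnorm_projector_col; last exact: orth_projector_compl.
rewrite QQt !mulmxA mxtrace_mulC !mulmxA.
have -> : U^T *m (1%:M - P) *m U = 1%:M - U^T *m P *m U.
  by rewrite mulmxBr mulmxBl mulmx1 U_orth.
rewrite -(big_nat_trunc _ n k); apply: sum_tail_le_mxtrace_compl.
- exact: orth_projector_conj.
- rewrite mxtrace_mulC mulmxA (mulmx1C U_orth) mul1mx mxtrace_orthoproj //.
  by rewrite ler_nat (leq_trans (rank_leq_row A)) // addnC.
- exact: singular_values_sq_noninc hs.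
- by move=> i _; case: ifP => _; rewrite ?sqr_ge0.
Qed.
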